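(* A function $g\in\mathcal{G}$ is slow-jumping if and only if there exists a sub-polynomial function $h$ such that for all positive integers $x<y$ we have $g(y)\le \lfloor y/x\rfloor^2\, h(\lfloor y/x\rfloor x)\, g(x)$.
   Context: $\mathcal{G}=\{g:\mathbb{Z}_{\ge0}\to\mathbb{R}: g(0)=0,\ g(1)=1,\ g(x)>0\ \forall x>0\}$. A function $f:\mathbb{R}_{\ge0}\to\mathbb{R}_{\ge0}$ is sub-polynomial if for every $\alpha>0$, $\lim_{x\to\infty}x^\alpha f(x)=\infty$ and $\lim_{x\to\infty}x^{-\alpha}f(x)=0$. $g$ is slow-jumping if for every $\alpha>0$ there is $N>0$ such that for all positive integers $x<y$ with $y\ge N$, $g(y)\le \lfloor y/x\rfloor^{2+\alpha}x^\alpha g(x)$. *)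

From Stdlib Require Import Reals Lra Lia.
Open Scope R_scope.

Definition in_G (g : nat -> R) : Prop :=
  g 0%nat = 0 /\ g 1%nat = 1 /\ forall x : nat, (0 < x)%nat -> 0 < g x.

Definition tends_to_pinfty (F : R -> R) : Prop :=
  forall M : R, exists N : R, forall x : R, N <= x -> M <= F x.

Definition tends_to_zero (F : R -> R) : Prop :=
  forall eps : R, 0 < eps -> exists N : R, forall x : R, N <= x -> Rabs (F x) < eps.

(* f : R_{>=0} -> R_{>=0} is sub-polynomial.  f is given as a total function
   R -> R; only its values on [0, +oo) matter, and these are required to be
   nonnegative.  x^alpha is Rpower x alpha (only used for large x > 0). *)
Definition sub_polynomial (f : R -> R) : Prop :=
  (forall x : R, 0 <= x -> 0 <= f x) /\
  forall alpha : R, 0 < alpha ->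
    tends_to_pinfty (fun x => Rpower x alpha * f x) /\
    tends_to_zero (fun x => Rpower x (- alpha) * f x).

(* slow-jumping: for every alpha > 0 there is N > 0 such that for all positive
   integers x < y with y >= N, g(y) <= floor(y/x)^(2+alpha) * x^alpha * g(x).
   floor(y/x) for positive integers is the nat division y / x. *)
Definition slow_jumping (g : nat -> R) : Prop :=
  forall alpha : R, 0 < alpha ->
    exists N : R, 0 < N /\
      forall x y : nat, (0 < x)%nat -> (x < y)%nat -> N <= INR y ->
        g y <= Rpower (INR (Nat.div y x)) (2 + alpha) * Rpower (INR x) alpha * g x.

From Stdlib Require Import Reals Lra Lia.
Open Scope R_scope.

(** Write [q = y / x].  Since [q^(2+a) x^a = q^2 (q x)^a], slow-jumping says that
    the normalised jump [g y / (q^2 g x)] is at most [(q x)^a] once [y] is large.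
    Hence the largest normalised jump among the finitely many pairs with [q x <= t]
    (or 1 if larger) is [O(t^b)] for every [b > 0]; as it is also at least 1, this
    envelope is sub-polynomial and it satisfies the required inequality by
    construction.  Conversely a sub-polynomial [h] is eventually below [t^a], and
    [q x > y / 2], so the inequality with [h] gives slow-jumping with threshold
    twice that of [h]. *)

Lemma Rpower_gt_0 x a : 0 < Rpower x a.
Proof. apply exp_pos. Qed.

Lemma Rpower_ge_1 t a : 1 <= t -> 0 <= a -> 1 <= Rpower t a.
Proof.
  intros Ht Ha. rewrite <- (Rpower_O t) by lra. apply Rle_Rpower; lra.
Qed.

Lemma Rpower_eventually_ge a M : 0 < a ->
  exists N, forall t, N <= t -> M <= Rpower t a.
Proof.
  intros Ha. set (M1 := Rmax M 1).
  assert (HM1 : 1 <= M1) by apply Rmax_r.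
  exists (Rpower M1 (/ a)). intros t Ht.
  assert (E : Rpower (Rpower M1 (/ a)) a = M1).
  { rewrite Rpower_mult, Rinv_l, Rpower_1 by lra. reflexivity. }
  apply Rle_trans with M1; [apply Rmax_l|].
  rewrite <- E. apply Rle_Rpower_l; [lra|]. split; [apply Rpower_gt_0 | exact Ht].
Qed.

Lemma Rpower_Ropp_eventually_le a e : 0 < a -> 0 < e ->
  exists N, forall t, N <= t -> Rpower t (- a) <= e.
Proof.
  intros Ha He. destruct (Rpower_eventually_ge a (/ e) Ha) as [N HN].
  exists N. intros t Ht. rewrite Rpower_Ropp, <- (Rinv_inv e).
  apply Rinv_le_contravar; [apply Rinv_0_lt_compat | apply HN]; assumption.
Qed.

Lemma Rpower_mult_split q x a : 0 < q -> 0 < x ->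
  Rpower q (2 + a) * Rpower x a = q ^ 2 * Rpower (q * x) a.
Proof.
  intros Hq Hx. rewrite Rpower_plus, <- Rpower_mult_distr by lra.
  replace 2 with (INR 2) by (simpl; ring). rewrite Rpower_pow by lra. ring.
Qed.

Lemma sub_polynomial_of_growth (h : R -> R) :
  (forall t, 1 <= h t) ->
  (forall b, 0 < b -> exists C, forall t, 1 <= t -> h t <= C * Rpower t b) ->
  sub_polynomial h.
Proof.
  intros h_ge1 h_growth. split; [intros t _; specialize (h_ge1 t); lra|].
  intros a Ha. split.
  - intros M. destruct (Rpower_eventually_ge a M Ha) as [N HN].
    exists N. intros t Ht. specialize (HN t Ht). specialize (h_ge1 t).
    pose proof (Rpower_gt_0 t a). nra.
  - intros eps Heps.
    destruct (h_growth (a / 2) ltac:(lra)) as [C HC].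
    set (C1 := Rmax C 1). assert (HC1 : 1 <= C1) by apply Rmax_r.
    destruct (Rpower_Ropp_eventually_le (a / 2) (eps / (2 * C1)))
      as [N HN]; [lra | apply Rdiv_lt_0_compat; lra |].
    exists (Rmax N 1). intros t Ht.
    assert (HtN : N <= t) by (eapply Rle_trans; [apply Rmax_l | exact Ht]).
    assert (Ht1 : 1 <= t) by (eapply Rle_trans; [apply Rmax_r | exact Ht]).
    assert (Hsplit : Rpower t (- a) * Rpower t (a / 2) = Rpower t (- (a / 2))).
    { rewrite <- Rpower_plus. f_equal. lra. }
    pose proof (Rpower_gt_0 t (- a)). pose proof (Rpower_gt_0 t (a / 2)).
    assert (Hh : h t <= C1 * Rpower t (a / 2)).
    { eapply Rle_trans; [apply HC, Ht1|].
      apply Rmult_le_compat_r; [lra | apply Rmax_l]. }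
    specialize (h_ge1 t). specialize (HN t HtN).
    rewrite Rabs_pos_eq by nra.
    apply Rle_lt_trans with (C1 * Rpower t (- (a / 2))).
    + rewrite <- Hsplit. nra.
    + apply Rle_lt_trans with (C1 * (eps / (2 * C1))).
      * apply Rmult_le_compat_l; lra.
      * replace (C1 * (eps / (2 * C1))) with (eps / 2) by (field; lra). lra.
Qed.

Lemma sub_polynomial_eventually_le (h : R -> R) a : sub_polynomial h -> 0 < a ->
  exists N, forall t, N <= t -> h t <= Rpower t a.
Proof.
  intros [h_nneg h_lim] Ha. destruct (proj2 (h_lim a Ha) 1 Rlt_0_1) as [N HN].
  exists (Rmax N 1). intros t Ht.
  assert (HtN : N <= t) by (eapply Rle_trans; [apply Rmax_l | exact Ht]).
  assert (Ht0 : 0 <= t) by (pose proof (Rmax_r N 1); lra).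
  specialize (HN t HtN). specialize (h_nneg t Ht0).
  pose proof (Rpower_gt_0 t a) as Hta.
  rewrite Rpower_Ropp, Rabs_pos_eq in HN
    by (apply Rmult_le_pos; [left; apply Rinv_0_lt_compat |]; assumption).
  apply (Rmult_lt_compat_l (Rpower t a)) in HN; [|exact Hta].
  rewrite <- Rmult_assoc, Rinv_r, Rmult_1_l in HN by lra. lra.
Qed.

Lemma div_mul_bounds x y : (0 < x)%nat -> (x < y)%nat ->
  (0 < y / x /\ 0 < y / x * x /\ y / x * x <= y /\ y < 2 * (y / x * x))%nat.
Proof.
  intros Hx Hy. pose proof (Nat.div_mod_eq y x) as E.
  pose proof (Nat.mod_upper_bound y x ltac:(lia)) as M.
  set (q := (y / x)%nat) in *. set (r := (y mod x)%nat) in *.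
  assert (Hq : (0 < q)%nat) by (destruct q; lia).
  nia.
Qed.

Lemma up_INR m : Z.to_nat (up (INR m)) = S m.
Proof.
  rewrite <- (up_tech (INR m) (Z.of_nat m)); [lia | |];
    rewrite INR_IZR_INZ; [| rewrite plus_IZR]; lra.
Qed.

Lemma lt_to_nat_up n r : INR n <= r -> (n < Z.to_nat (up r))%nat.
Proof.
  intros Hn. destruct (archimed r) as [Hup _].
  assert (Hlt : (Z.of_nat n < up r)%Z).
  { apply lt_IZR. rewrite <- INR_IZR_INZ. lra. }
  lia.
Qed.

Lemma INR_to_nat_up_le t : 0 <= t -> INR (Z.to_nat (up t)) <= t + 1.
Proof.
  intros Ht. destruct (archimed t) as [Hup Hup1].
  rewrite INR_IZR_INZ, Znat.Z2Nat.id; [lra|]. apply le_IZR. lra.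
Qed.

Fixpoint max_below (n : nat) (f : nat -> R) : R :=
  match n with O => 0 | S k => Rmax (max_below k f) (f k) end.

Lemma le_max_below n f i : (i < n)%nat -> f i <= max_below n f.
Proof.
  induction n as [|n IH]; intros Hi; [lia|]. simpl.
  destruct (Nat.eq_dec i n) as [->|Hne]; [apply Rmax_r|].
  eapply Rle_trans; [apply IH; lia | apply Rmax_l].
Qed.

Lemma max_below_le n f B : 0 <= B -> (forall i, (i < n)%nat -> f i <= B) ->
  max_below n f <= B.
Proof.
  intros HB. induction n as [|n IH]; intros Hf; simpl; [exact HB|].
  apply Rmax_lub; auto.
Qed.

Section Jumps.

Variable g : nat -> R.
Hypothesis g_pos : forall x, (0 < x)%nat -> 0 < g x.

Definition jump_ratio (x y : nat) : R := g y / (INR (y / x) ^ 2 * g x).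

Lemma jump_ratio_le x y c : (0 < x)%nat -> (x < y)%nat ->
  jump_ratio x y <= c <-> g y <= INR (y / x) ^ 2 * c * g x.
Proof.
  intros Hx Hy. destruct (div_mul_bounds x y Hx Hy) as [Hq _].
  assert (HD : 0 < INR (y / x) ^ 2 * g x).
  { apply Rmult_lt_0_compat; [apply pow_lt, lt_0_INR | apply g_pos]; assumption. }
  unfold jump_ratio.
  replace (INR (y / x) ^ 2 * c * g x) with (c * (INR (y / x) ^ 2 * g x)) by ring.
  set (D := INR (y / x) ^ 2 * g x) in *.
  split; intros H.
  - replace (g y) with (g y / D * D) by (field; lra).
    apply Rmult_le_compat_r; [lra | exact H].
  - replace c with (c * D / D) by (field; lra).
    apply Rmult_le_compat_r; [left; apply Rinv_0_lt_compat|]; assumption.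
Qed.

Definition jump_admissible (k x y : nat) : bool :=
  (0 <? x)%nat && (x <? y)%nat && (y / x * x <? k)%nat.

(* An admissible pair has [y < 2 (y / x) x < 2 k], so both maxima range far enough. *)
Definition jump_bound (k : nat) : R :=
  Rmax 1 (max_below (2 * k) (fun y => max_below (2 * k) (fun x =>
    if jump_admissible k x y then jump_ratio x y else 0))).

Lemma jump_bound_ge1 k : 1 <= jump_bound k.
Proof. apply Rmax_l. Qed.

Lemma le_jump_bound k x y : (0 < x)%nat -> (x < y)%nat -> (y / x * x < k)%nat ->
  jump_ratio x y <= jump_bound k.
Proof.
  intros Hx Hy Hk. destruct (div_mul_bounds x y Hx Hy) as (_ & _ & _ & Hy2).
  assert (Hadm : jump_admissible k x y = true).
  { unfold jump_admissible. rewrite !Bool.andb_true_iff, !Nat.ltb_lt. lia. }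
  unfold jump_bound. eapply Rle_trans; [|apply Rmax_r].
  eapply Rle_trans; [|apply (le_max_below _ _ y); lia]. cbv beta.
  eapply Rle_trans; [|apply (le_max_below _ _ x); lia]. cbv beta.
  rewrite Hadm. apply Rle_refl.
Qed.

Lemma jump_bound_le k B : 1 <= B ->
  (forall x y, (0 < x)%nat -> (x < y)%nat -> (y / x * x < k)%nat -> jump_ratio x y <= B) ->
  jump_bound k <= B.
Proof.
  intros HB Hratio. apply Rmax_lub; [exact HB|].
  apply max_below_le; [lra|]. intros y _. apply max_below_le; [lra|]. intros x _.
  destruct (jump_admissible k x y) eqn:Hadm; [|lra].
  unfold jump_admissible in Hadm. rewrite !Bool.andb_true_iff, !Nat.ltb_lt in Hadm.
  apply Hratio; tauto.
Qed.

Lemma jump_bound_growth : slow_jumping g -> forall b, 0 < b ->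
  exists C, forall k, jump_bound k <= C + Rpower (INR k) b.
Proof.
  intros SJ b Hb. destruct (SJ b Hb) as [N [_ HN]].
  pose proof (jump_bound_ge1 (Z.to_nat (up N))).
  exists (jump_bound (Z.to_nat (up N))). intros k. pose proof (Rpower_gt_0 (INR k) b).
  apply jump_bound_le; [lra|]. intros x y Hx Hy Hk.
  destruct (div_mul_bounds x y Hx Hy) as (Hq & Hm & Hmy & _).
  destruct (Rle_lt_dec N (INR y)) as [HyN|HyN].
  - enough (jump_ratio x y <= Rpower (INR k) b) by lra.
    apply (Rle_trans _ (Rpower (INR (y / x * x)) b)).
    + apply jump_ratio_le; [exact Hx | exact Hy |].
      rewrite mult_INR, <- Rpower_mult_split by (apply lt_0_INR; lia).
      exact (HN x y Hx Hy HyN).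
    + apply Rle_Rpower_l; [lra|].
      split; [apply lt_0_INR | apply le_INR]; lia.
  - assert (HK : (y / x * x < Z.to_nat (up N))%nat).
    { apply lt_to_nat_up. apply Rle_trans with (INR y); [apply le_INR; lia | lra]. }
    pose proof (le_jump_bound _ x y Hx Hy HK). lra.
Qed.

Definition jump_envelope (t : R) : R := jump_bound (Z.to_nat (up t)).

Lemma jump_envelope_spec x y : (0 < x)%nat -> (x < y)%nat ->
  g y <= INR (y / x) ^ 2 * jump_envelope (INR (y / x * x)) * g x.
Proof.
  intros Hx Hy. apply jump_ratio_le; [exact Hx | exact Hy |].
  unfold jump_envelope. rewrite up_INR. apply le_jump_bound; lia.
Qed.

Lemma jump_envelope_growth : slow_jumping g -> forall b, 0 < b ->
  exists C, forall t, 1 <= t -> jump_envelope t <= C * Rpower t b.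
Proof.
  intros SJ b Hb. destruct (jump_bound_growth SJ b Hb) as [C0 HC0].
  exists (Rmax C0 0 + Rpower 2 b). intros t Ht.
  assert (Hk : INR (Z.to_nat (up t)) <= 2 * t) by (pose proof (INR_to_nat_up_le t); lra).
  assert (Hk0 : (0 < Z.to_nat (up t))%nat) by (apply lt_to_nat_up; simpl; lra).
  assert (Hkb : Rpower (INR (Z.to_nat (up t))) b <= Rpower 2 b * Rpower t b).
  { rewrite Rpower_mult_distr by lra. apply Rle_Rpower_l; [lra|].
    split; [apply lt_0_INR|]; assumption. }
  pose proof (Rpower_ge_1 t b Ht ltac:(lra)). pose proof (Rpower_gt_0 2 b).
  pose proof (Rmax_l C0 0). pose proof (Rmax_r C0 0).
  specialize (HC0 (Z.to_nat (up t))). unfold jump_envelope. nra.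
Qed.

Lemma slow_jumping_of_sub_polynomial_bound (h : R -> R) : sub_polynomial h ->
  (forall x y, (0 < x)%nat -> (x < y)%nat ->
     g y <= INR (y / x) ^ 2 * h (INR (y / x * x)) * g x) ->
  slow_jumping g.
Proof.
  intros Hh Hjump a Ha. destruct (sub_polynomial_eventually_le h a Hh Ha) as [N HN].
  pose proof (Rmax_l N 1). pose proof (Rmax_r N 1).
  exists (2 * Rmax N 1). split; [lra|]. intros x y Hx Hy HyN.
  destruct (div_mul_bounds x y Hx Hy) as (Hq & Hm & _ & Hy2).
  assert (Hm2 : INR y < 2 * INR (y / x * x)).
  { replace 2 with (INR 2) by reflexivity. rewrite <- mult_INR. apply lt_INR, Hy2. }
  assert (HmN : N <= INR (y / x * x)) by lra.
  pose proof (g_pos x Hx). pose proof (pow2_ge_0 (INR (y / x))).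
  rewrite Rpower_mult_split, <- mult_INR by (apply lt_0_INR; lia).
  eapply Rle_trans; [apply Hjump; [exact Hx | exact Hy]|].
  apply Rmult_le_compat_r; [lra|]. apply Rmult_le_compat_l; [lra|]. apply HN, HmN.
Qed.

End Jumps.

Theorem proposition16 (g : nat -> R) (Hg : in_G g) :
  slow_jumping g <->
  exists h : R -> R, sub_polynomial h /\
    forall x y : nat, (0 < x)%nat -> (x < y)%nat ->
      g y <= INR (Nat.div y x) ^ 2 * h (INR (Nat.div y x * x)) * g x.
Proof.
  destruct Hg as (_ & _ & g_pos). split.
  - intros SJ. exists (jump_envelope g). split.
    + apply sub_polynomial_of_growth.
      * intros t. apply jump_bound_ge1.
      * exact (jump_envelope_growth g g_pos SJ).
    + exact (jump_envelope_spec g g_pos).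
  - intros (h & Hh & Hjump). exact (slow_jumping_of_sub_polynomial_bound g g_pos h Hh Hjump).
Qed.
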